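(* Let $A\in\mathbb{Z}^{m\times n}$, $b\in\mathbb{Z}^m$. If $Ax\leq b$ is totally dual $p$-adic and totally dual $q$-adic for distinct primes $p,q$, then $\{x:Ax\leq b\}$ is an integral polyhedron.
   Context: For a prime $p$, a $p$-adic rational is a number $a/p^k$ with $a,k\in\mathbb{Z}$, $k\ge0$; a vector is $p$-adic if all entries are $p$-adic rationals. A system $Ax\le b$ with integral $A,b$ is totally dual $p$-adic if for every integral $w$ for which $\min\{b^\top y: A^\top y=w,\ y\ge \mathbf{0}\}$ has an optimal solution, it has a $p$-adic optimal solution. A rational polyhedron is integral if every nonempty face of it contains an integral point. *)

From HB Require Import structures.
From mathcomp Require Import all_boot all_order all_algebra.
Set Implicit Arguments. Unset Strict Implicit. Unset Printing Implicit Defensive.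
Import Order.TTheory GRing.Theory Num.Theory.
Local Open Scope ring_scope.

(* Points of R^n are represented by rational column vectors 'cV[rat]_n;
   since all data are integral, polyhedra, faces and LP optima are rational. *)

Definition padic (p : nat) (r : rat) : Prop :=
  exists (a : int) (k : nat), r = a%:~R / (p ^ k)%:R.

Definition padic_vec (p m : nat) (y : 'cV[rat]_m) : Prop :=
  forall i, padic p (y i 0).

Definition dual_feasible (m n : nat) (A : 'M[int]_(m, n)) (w : 'cV[int]_n)
  (y : 'cV[rat]_m) : Prop :=
  (forall i, 0 <= y i 0) /\
  (forall j, \sum_(i < m) (A i j)%:~R * y i 0 = (w j 0)%:~R).

Definition dual_obj (m : nat) (b : 'cV[int]_m) (y : 'cV[rat]_m) : rat :=
  \sum_(i < m) (b i 0)%:~R * y i 0.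

Definition dual_optimal (m n : nat) (A : 'M[int]_(m, n)) (b : 'cV[int]_m)
  (w : 'cV[int]_n) (y : 'cV[rat]_m) : Prop :=
  dual_feasible A w y /\
  (forall y', dual_feasible A w y' -> dual_obj b y <= dual_obj b y').

Definition totally_dual_padic (p m n : nat) (A : 'M[int]_(m, n))
  (b : 'cV[int]_m) : Prop :=
  forall w : 'cV[int]_n,
    (exists y, dual_optimal A b w y) ->
    exists y, dual_optimal A b w y /\ padic_vec p y.

Definition in_poly (m n : nat) (A : 'M[int]_(m, n)) (b : 'cV[int]_m)
  (x : 'cV[rat]_n) : Prop :=
  forall i, \sum_(j < n) (A i j)%:~R * x j 0 <= (b i 0)%:~R.

Definition dotv (n : nat) (c x : 'cV[rat]_n) : rat := \sum_(j < n) c j 0 * x j 0.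

(* F is a face of P: F = {x in P : c^T x = d} for some inequality
   c^T x <= d valid for P (c = 0, d = 0 gives P itself). *)
Definition is_face (m n : nat) (A : 'M[int]_(m, n)) (b : 'cV[int]_m)
  (F : 'cV[rat]_n -> Prop) : Prop :=
  exists (c : 'cV[rat]_n) (d : rat),
    (forall x, in_poly A b x -> dotv c x <= d) /\
    (forall x, F x <-> (in_poly A b x /\ dotv c x = d)).

Definition int_point (n : nat) (x : 'cV[rat]_n) : Prop :=
  exists z : 'cV[int]_n, x = map_mx (fun t : int => t%:~R) z.

Definition integral_polyhedron (m n : nat) (A : 'M[int]_(m, n))
  (b : 'cV[int]_m) : Prop :=
  forall F, is_face A b F -> (exists x, F x) -> exists x, F x /\ int_point x.

(* Rationals that are both p-adic and q-adic for coprime p and q are integers,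
   so total dual p- and q-adicity force every optimal value
   min {b^T y : A^T y = w, y >= 0} with w integral to be an integer.  This
   yields integrality by the Edmonds-Giles argument.  Let x lie in a face F
   and let T be the set of rows tight at x.  The system A_T z = b_T has an
   integral solution: otherwise the Smith normal form of A_T gives a rational
   y with y A_T integral and y b_T not, and shifting y by integers on T gives
   a dual solution, optimal by complementary slackness with x, whose value is
   not an integer.  Walking from x towards z either reaches z inside F or
   stops on a new tight row, still inside F; so induction on |T| ends at an
   integral point of F. *)

From mathcomp Require Import all_boot all_order all_algebra ring lra zify.
Import Order.TTheory GRing.Theory Num.Theory.
Local Open Scope ring_scope.
Set Implicit Arguments.
Unset Strict Implicit.
Unset Printing Implicit Defensive.

Lemma padic_int p (z : int) : padic p z%:~R.
Proof. by exists z, 0%N; rewrite expn0 divr1. Qed.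

Lemma natrX_neq0 p k : (0 < p)%N -> (p ^ k)%:R != 0 :> rat.
Proof. by move=> p_gt0; rewrite pnatr_eq0 -lt0n expn_gt0 p_gt0. Qed.

Lemma padicD p r s : (0 < p)%N -> padic p r -> padic p s -> padic p (r + s).
Proof.
move=> p_gt0 [a [k ->]] [c [l ->]].
exists (a * (p ^ l)%:R + c * (p ^ k)%:R), (k + l)%N.
rewrite expnD natrM rmorphD /= !rmorphM /= !natz !pmulrn.
by field; rewrite !natrX_neq0.
Qed.

Lemma padicM p r s : padic p r -> padic p s -> padic p (r * s).
Proof.
move=> [a [k ->]] [c [l ->]]; exists (a * c), (k + l)%N.
by rewrite expnD natrM rmorphM /= invfM mulrACA.
Qed.

Lemma padic_coprime_int p q r : (0 < p)%N -> (0 < q)%N -> coprime p q ->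
  padic p r -> padic q r -> r \is a Num.int.
Proof.
move=> p_gt0 q_gt0 copq [a [k ->]] [c [l /eqP]].
rewrite eqr_div ?natrX_neq0 // => /eqP e.
have /eqP : (a * (q ^ l)%:Z)%:~R = (c * (p ^ k)%:Z)%:~R :> rat by rewrite !intrM.
rewrite eqr_int => /eqP {}e.
apply: (@Qint_dvdz a (p ^ k)%:Z).
have copXz : coprimez (p ^ k)%:Z (q ^ l)%:Z by apply/coprimeXl/coprimeXr.
by rewrite -(Gauss_dvdzl _ copXz) e dvdz_mull.
Qed.

Local Notation mxQ := (map_mx (intr : int -> rat)).

Lemma dotvD n (c x y : 'cV[rat]_n) : dotv c (x + y) = dotv c x + dotv c y.
Proof. by rewrite /dotv -big_split; apply: eq_bigr => j _; rewrite mxE mulrDr. Qed.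

Lemma dotvZ n (c x : 'cV[rat]_n) t : dotv c (t *: x) = t * dotv c x.
Proof. by rewrite /dotv mulr_sumr; apply: eq_bigr => j _; rewrite mxE mulrCA. Qed.

Lemma int_solution_or_certificate m n (M : 'M[int]_(m, n)) (x : 'cV[rat]_n) :
  (exists z : 'cV[int]_n, mxQ M *m mxQ z = mxQ M *m x) \/
  (exists (y : 'rV[rat]_m) (u : 'rV[int]_n),
     y *m mxQ M = mxQ u /\ (mxQ u *m x) 0 0 \notin Num.int).
Proof.
(* With M = L D R in Smith normal form, either every non-integral entry of
   R x meets a zero column of D, and rounding R x gives a solution, or
   D i j != 0 with (R x) j non-integral, and y := e_i L^-1 / D i j has
   y M = row j R. *)
have [L uL [R uR [d _ defM]]] := int_Smith_normal_form M.
set D := \matrix_(i, j) _ in defM.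
have DE i j : D i j = d`_i *+ (i == j :> nat) by rewrite mxE.
clearbody D.
have MQ : mxQ M = mxQ L *m mxQ D *m mxQ R by rewrite defM !map_mxM.
set x' := mxQ R *m x; have x'E : x' = mxQ R *m x by []; clearbody x'.
have [/forallP x'_int | ] :=
  boolP [forall j, (x' j 0 \is a Num.int) || [forall i, D i j == 0]].
  left; pose z : 'cV[int]_n := \col_j Num.floor (x' j 0).
  have Dz : mxQ D *m mxQ z = mxQ D *m x'.
    apply/matrixP => i k; rewrite (ord1 k) !mxE; apply: eq_bigr => j _; rewrite !mxE.
    have /orP[/floorK -> // | /forallP/(_ i)/eqP->] := x'_int j.
    by rewrite mulr0z !mul0r.
  exists (invmx R *m z); rewrite map_mxM MQ -!mulmxA (mulmxA (mxQ R)).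
  by rewrite -map_mxM mulmxV // map_mx1 mul1mx Dz x'E !mulmxA.
move/forallPn => [j]; rewrite negb_or => /andP[x'j_nint /forallPn[i Dij]].
have rowD : 'e_i *m mxQ D = (D i j)%:~R *: ('e_j : 'rV[rat]_n).
  have eij : (i : nat) = j.
    by apply/eqP; apply: contraNT Dij => /negPf nij; rewrite DE nij.
  apply/matrixP => a k; rewrite (ord1 a) -rowE !mxE !DE eij eqxx andTb mulr1n.
  have [->|nkj] := eqVneq k j; first by rewrite eqxx mulr1.
  by rewrite mulr0 val_eqE eq_sym (negbTE nkj) mulr0n.
right; exists ((D i j)%:~R^-1 *: ('e_i *m mxQ (invmx L))), (row j R); split.
  rewrite -scalemxAl MQ !mulmxA -(mulmxA _ (mxQ (invmx L))) -map_mxM mulVmx //.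
  rewrite map_mx1 mulmx1 rowD -scalemxAl scalerA mulVf ?scale1r ?map_row ?rowE //.
  by rewrite intr_eq0.
by rewrite map_row -row_mul mxE -x'E.
Qed.

Section Polyhedron.
Variables (m n : nat) (A : 'M[int]_(m, n)) (b : 'cV[int]_m).
Local Notation bq i := ((b i 0)%:~R : rat).

Definition ax i (x : 'cV[rat]_n) : rat := \sum_(j < n) (A i j)%:~R * x j 0.

Lemma axD i x y : ax i (x + y) = ax i x + ax i y.
Proof. by rewrite /ax -big_split; apply: eq_bigr => j _; rewrite mxE mulrDr. Qed.

Lemma axZ i t x : ax i (t *: x) = t * ax i x.
Proof. by rewrite /ax mulr_sumr; apply: eq_bigr => j _; rewrite mxE mulrCA. Qed.

Lemma in_polyP x : reflect (in_poly A b x) [forall i, ax i x <= bq i].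
Proof. exact: forallP. Qed.

Definition rows_on (T : {set 'I_m}) : 'M[int]_(m, n) :=
  \matrix_(i, j) (if i \in T then A i j else 0).

Lemma rows_onE T x i : (mxQ (rows_on T) *m x) i 0 = if i \in T then ax i x else 0.
Proof.
rewrite mxE /ax; case: ifP => iT; last by rewrite big1 // => j _; rewrite !mxE iT mul0r.
by apply: eq_bigr => j _; rewrite !mxE iT.
Qed.

Lemma dual_feasible_obj w y (x : 'cV[rat]_n) : dual_feasible A w y ->
  \sum_(j < n) (w j 0)%:~R * x j 0 = \sum_(i < m) y i 0 * ax i x.
Proof.
case=> _ yA; under eq_bigr => j _ do rewrite -yA mulr_suml.
rewrite exchange_big /=; apply: eq_bigr => i _; rewrite mulr_sumr.
by apply: eq_bigr => j _; rewrite mulrAC mulrC.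
Qed.

Lemma weak_duality w y (x : 'cV[rat]_n) : in_poly A b x -> dual_feasible A w y ->
  \sum_(j < n) (w j 0)%:~R * x j 0 <= dual_obj b y.
Proof.
move=> Px feas_y; rewrite (dual_feasible_obj x feas_y); apply: ler_sum => i _.
rewrite mulrC; apply: ler_wpM2r; [by case: feas_y | exact: Px].
Qed.

Lemma compl_slack_optimal w y (x : 'cV[rat]_n) :
  in_poly A b x -> dual_feasible A w y ->
  (forall i, y i 0 != 0 -> ax i x = bq i) -> dual_optimal A b w y.
Proof.
move=> Px feas_y slack; split=> // y' feas_y'.
suff -> : dual_obj b y = \sum_(j < n) (w j 0)%:~R * x j 0 by apply: weak_duality.
rewrite (dual_feasible_obj x feas_y); apply: eq_bigr => i _.
by have [->|/slack->] := eqVneq (y i 0) 0; rewrite ?mulr0 ?mul0r // mulrC.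
Qed.

Lemma dual_optimal_obj_eq w y y' : dual_optimal A b w y -> dual_optimal A b w y' ->
  dual_obj b y = dual_obj b y'.
Proof.
by move=> [feas_y opt_y] [feas_y' opt_y']; apply/le_anti; rewrite opt_y ?opt_y'.
Qed.

Lemma padic_dual_obj p y : (0 < p)%N -> padic_vec p y -> padic p (dual_obj b y).
Proof.
move=> p_gt0 y_padic; apply: (big_ind (padic p)).
- exact: (padic_int p 0).
- by move=> r s; apply: padicD.
- by move=> i _; apply: padicM; [apply: padic_int | apply: y_padic].
Qed.

Definition tight x : {set 'I_m} := [set i | ax i x == bq i].

Lemma ratio_test x v : in_poly A b x -> {in tight x, forall i, ax i v = 0} ->
  ~ in_poly A b (x + v) ->
  exists t, [/\ 0 < t, in_poly A b (x + t *: v) & tight x \proper tight (x + t *: v)].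
Proof.
move=> Px v_tight /in_polyP/forallPn[i0]; rewrite -ltNge (axD i0) => i0_viol.
have Px_i i : ax i x <= bq i := Px i.
pose S i := (i \notin tight x) && (0 < ax i v).
pose ratio i := (bq i - ax i x) / ax i v.
have S_i0 : S i0.
  have v_i0 : 0 < ax i0 v by have := Px_i i0; lra.
  by rewrite /S v_i0 andbT; apply: contraTN v_i0 => /v_tight->; rewrite ltxx.
have [i /andP[i_loose v_i] ratio_min] := arg_minP ratio S_i0.
have slack_i : 0 < bq i - ax i x.
  by rewrite subr_gt0 lt_neqAle Px_i andbT; rewrite inE in i_loose.
have t_gt0 : 0 < ratio i := divr_gt0 slack_i v_i.
exists (ratio i); split => //.
- move=> k; rewrite -/(ax k _) axD axZ.
  have [k_tight | k_loose] := boolP (k \in tight x).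
    by rewrite v_tight // mulr0 addr0.
  have [v_k | ] := ltrP 0 (ax k v); last by have := Px_i k; nra.
  have := ratio_min k; rewrite /S k_loose v_k => /(_ isT).
  by rewrite {2}/ratio ler_pdivlMr // -lerBrDl mulrC.
- apply/properP; split.
    apply/subsetP => k k_tight; rewrite inE axD axZ v_tight // mulr0 addr0.
    by rewrite inE in k_tight.
  exists i => //.
  by rewrite inE axD axZ /ratio divfK ?lt0r_neq0 // addrC subrK.
Qed.

Lemma feasible_dir_step x v : in_poly A b x -> {in tight x, forall i, ax i v = 0} ->
  exists2 t, 0 < t & in_poly A b (x + t *: v).
Proof.
move=> Px v_tight; have [Pxv | not_Pxv] := in_polyP (x + v).
  by exists 1; rewrite ?scale1r.
by have [t [t_gt0 Pxtv _]] := ratio_test Px v_tight not_Pxv; exists t.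
Qed.

Lemma face_step c d x z : (forall y, in_poly A b y -> dotv c y <= d) ->
  in_poly A b x -> dotv c x = d -> {in tight x, forall i, ax i z = bq i} ->
  (in_poly A b z /\ dotv c z = d) \/
  exists x', [/\ in_poly A b x', dotv c x' = d & tight x \proper tight x'].
Proof.
move=> c_valid Px cx z_tight.
have [v zE] : exists v, z = x + v by exists (z - x); rewrite addrC subrK.
have v_tight : {in tight x, forall i, ax i v = 0}.
  move=> i i_tight; have := z_tight i i_tight; rewrite zE axD.
  by move: i_tight; rewrite inE => /eqP->; lra.
have cv : dotv c v = 0.
  have [t t_gt0 /c_valid] := feasible_dir_step Px v_tight.
  have Nv_tight : {in tight x, forall i, ax i (- v) = 0}.
    by move=> i /v_tight v_i; rewrite -scaleN1r axZ v_i mulr0.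
  have [t' t'_gt0 /c_valid] := feasible_dir_step Px Nv_tight.
  rewrite !dotvD !dotvZ -scaleN1r dotvZ cx; nra.
have c_line t : dotv c (x + t *: v) = d by rewrite dotvD dotvZ cv mulr0 addr0.
have [Pz | not_Pz] := in_polyP z.
  by left; split; rewrite // zE -[v]scale1r c_line.
rewrite zE in not_Pz; have [t [_ Pxtv tight_lt]] := ratio_test Px v_tight not_Pz.
by right; exists (x + t *: v).
Qed.

Section IntegralDualValues.
Hypothesis dual_opt_int : forall w y, dual_optimal A b w y -> dual_obj b y \is a Num.int.

Lemma certificate_value_int (T : {set 'I_m}) x (y : 'rV[rat]_m) (u : 'rV[int]_n) :
  in_poly A b x -> {in T, forall i, ax i x = bq i} ->
  y *m mxQ (rows_on T) = mxQ u -> (mxQ u *m x) 0 0 \is a Num.int.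
Proof.
move=> Px x_tight yMu.
have uE j : (u 0 j)%:~R = \sum_(i in T) y 0 i * (A i j)%:~R.
  move/matrixP/(_ 0 j): yMu; rewrite !mxE => <-; rewrite [RHS]big_mkcond /=.
  by apply: eq_bigr => i _; rewrite !mxE; case: ifP; rewrite ?mulr0z ?mulr0.
(* y' is the fractional part of y on T, so y' >= 0 and w stays integral. *)
pose k i := - Num.floor (y 0 i).
pose y' : 'cV[rat]_m := \col_i (if i \in T then y 0 i + (k i)%:~R else 0).
pose w : 'cV[int]_n := \col_j (u 0 j + \sum_(i in T) k i * A i j).
have y'_feas : dual_feasible A w y'.
  split=> [i | j].
    by rewrite mxE; case: ifP => // _; rewrite /k rmorphN subr_ge0 floor_le.
  have -> : (w j 0)%:~R = (u 0 j)%:~R + \sum_(i in T) (k i)%:~R * (A i j)%:~R :> rat.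
    by rewrite mxE intrD rmorph_sum; congr (_ + _); apply: eq_bigr => i _; apply: rmorphM.
  rewrite uE -big_split [RHS]big_mkcond; apply: eq_bigr => i _; rewrite mxE.
  by case: ifP => _ /=; [ring | rewrite mulr0].
have y'_opt : dual_optimal A b w y'.
  apply: (compl_slack_optimal Px y'_feas) => i; rewrite mxE.
  by case: ifP => [/x_tight | _]; rewrite ?eqxx.
have : dual_obj b y' = (mxQ u *m x) 0 0 + (\sum_(i in T) k i * b i 0)%:~R.
  have -> : (\sum_(i in T) k i * b i 0)%:~R = \sum_(i in T) (k i)%:~R * bq i.
    by rewrite rmorph_sum; apply: eq_bigr => i _; apply: rmorphM.
  rewrite -yMu -mulmxA mxE [X in _ + X]big_mkcond -big_split.
  apply: eq_bigr => i _; rewrite rows_onE !mxE /=.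
  by case: ifP => [/x_tight-> | _]; [ring | rewrite !mulr0 addr0].
by move=> objE; have := dual_opt_int y'_opt; rewrite objE rpredDr // intr_int.
Qed.

Lemma int_point_on_tight (T : {set 'I_m}) x :
  in_poly A b x -> {in T, forall i, ax i x = bq i} ->
  exists z, int_point z /\ {in T, forall i, ax i z = bq i}.
Proof.
move=> Px x_tight.
have [[z Mz] | [y [u [yMu u_nint]]]] := int_solution_or_certificate (rows_on T) x.
  exists (mxQ z); split; first by exists z.
  by move=> i iT; move/matrixP/(_ i 0): Mz; rewrite !rows_onE iT => ->; apply: x_tight.
by rewrite (certificate_value_int Px x_tight yMu) in u_nint.
Qed.

Lemma integral_polyhedron_of_int_dual_values : integral_polyhedron A b.
Proof.
move=> F [c [d [c_valid FE]]] [x0 Fx0].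
suff: forall k x, (m - #|tight x| < k)%N -> F x -> exists z, F z /\ int_point z.
  by move=> /(_ _ x0 (ltnSn _) Fx0).
elim=> // k IHk x lt_k /FE[Px cx].
have x_tight : {in tight x, forall i, ax i x = bq i} by move=> i; rewrite inE => /eqP.
have [z [int_z z_tight]] := int_point_on_tight Px x_tight.
have [[Pz cz] | [x' [Px' cx' tight_lt]]] := face_step c_valid Px cx z_tight.
  by exists z; split => //; apply/FE.
apply: (IHk x'); last exact/FE.
by have := proper_card tight_lt; have := max_card (tight x'); rewrite card_ord; lia.
Qed.

End IntegralDualValues.

Lemma totally_dual_padic_obj p w y : (0 < p)%N -> totally_dual_padic p A b ->
  dual_optimal A b w y -> padic p (dual_obj b y).
Proof.
move=> p_gt0 tdp y_opt; have [y' [y'_opt y'_padic]] := tdp w (ex_intro _ y y_opt).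
by rewrite (dual_optimal_obj_eq y_opt y'_opt); apply: padic_dual_obj.
Qed.

End Polyhedron.

Theorem theorem1p5 (m n p q : nat) (A : 'M[int]_(m, n)) (b : 'cV[int]_m) :
  prime p -> prime q -> p != q ->
  totally_dual_padic p A b -> totally_dual_padic q A b ->
  integral_polyhedron A b.
Proof.
move=> p_pr q_pr neq_pq tdp tdq.
have [p_gt0 q_gt0] := (prime_gt0 p_pr, prime_gt0 q_pr).
have copq : coprime p q by rewrite prime_coprime // dvdn_prime2.
apply: integral_polyhedron_of_int_dual_values => w y y_opt.
by apply: (padic_coprime_int p_gt0 q_gt0 copq); apply: totally_dual_padic_obj y_opt.
Qed.
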